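(* Let $z\ge1$, $X\subset[\Delta]^d$ finite, $x\in X$ and $p\in X$ fixed, and $r=\|x-p\|_2$. Let $Q\subseteq X$ be a set of at most $k$ centers containing $p$ that is a constant-factor approximation to the optimal $(k,z)$-medoids clustering on $X$ among sets containing a center at $p$, and let $\Psi$ be a constant-factor approximation to $\mathrm{Cost}(X,Q)$. Let $S$ be an optimal $(k,z)$-medoids clustering on $X$ among sets containing a center at $p$ and no center in the interior of the ball $B_r(x)$. Let $n_b$ be the number of points of $X$ assigned (by $Q$, i.e., to their closest center in $Q$) to centers of $Q$ lying in $B_{r/2}(x)$. Then there exists a constant $\gamma\ge1$ such that \[\Psi+n_b\cdot r^z\le\gamma\cdot\mathrm{Cost}(X,S).\]
   Context: $\mathrm{Cost}(X,C)=\sum_{y\in X}\min_{c\in C}\|y-c\|_2^z$. A $(k,z)$-medoids clustering is a set of at most $k$ centers chosen from $X$. $B_\rho(x)$ denotes the Euclidean ball of radius $\rho$ centered at $x$. ''Constant-factor approximation'' means within a multiplicative constant factor; the constant $\gamma$ may depend on these constants and on $z$. *)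

From HB Require Import structures.
From mathcomp Require Import all_boot all_order all_algebra.
From mathcomp Require Import reals exp.
Set Implicit Arguments. Unset Strict Implicit. Unset Printing Implicit Defensive.
Import Order.TTheory GRing.Theory Num.Theory.
Local Open Scope ring_scope.

(* Points of the grid [Delta]^d = {1,...,Delta}^d.  A point is a finite
   function 'I_d -> 'I_Delta; coordinate i of y is the integer (y i) + 1. *)
Definition point (d Delta : nat) := {ffun 'I_d -> 'I_Delta}.

Definition coord (R : realType) (d Delta : nat) (y : point d Delta) (i : 'I_d) : R :=
  ((y i).+1)%:R.

Definition dist (R : realType) (d Delta : nat) (y c : point d Delta) : R :=
  Num.sqrt (\sum_(i < d) (coord R y i - coord R c i) ^+ 2).

(* min_{c in C} ||y - c||_2^z  (convention: 0 when C is empty; only used with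
   nonempty C) *)
Definition mincost (R : realType) (d Delta : nat) (z : R)
  (y : point d Delta) (C : {set point d Delta}) : R :=
  match [pick c in C] with
  | Some c0 => \big[Order.min/powR (dist R y c0) z]_(c in C) powR (dist R y c) z
  | None => 0
  end.

Definition Cost (R : realType) (d Delta : nat) (z : R)
  (X C : {set point d Delta}) : R :=
  \sum_(y in X) mincost z y C.

Definition feasible_p (d Delta k : nat) (X : {set point d Delta})
  (p : point d Delta) (C : {set point d Delta}) : Prop :=
  C \subset X /\ (#|C| <= k)%N /\ p \in C.

From Pilot Require Import Defs.
From HB Require Import structures.
From mathcomp Require Import all_boot all_order all_algebra.
From mathcomp Require Import reals exp.
From mathcomp Require Import ring lra.
Import Order.TTheory GRing.Theory Num.Theory.
Local Open Scope ring_scope.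

(* Let y be a point whose Q-center sigma y lies in B_{r/2}(x).  Since every
   center s of S satisfies ||x - s|| >= r, the triangle inequality gives
   ||y - s|| + ||y - sigma y|| >= r/2, so either y is at distance >= r/4 from
   all of S, or from sigma y and hence from all of Q.  Summing over these n_b
   points, n_b (r/4)^z <= Cost(X,S) + Cost(X,Q) <= (1 + alpha) Cost(X,S), while
   Psi <= beta Cost(X,Q) <= beta alpha Cost(X,S); so
   gamma = beta alpha + 4^z (1 + alpha) works. *)

Section EuclideanSums.
Variables (R : rcfType) (I : finType).
Implicit Types a b : I -> R.

Lemma cauchy_schwarz a b :
  (\sum_i a i * b i) ^+ 2 <= (\sum_i a i ^+ 2) * (\sum_i b i ^+ 2).
Proof.
set A := \sum_i a i ^+ 2; set B := \sum_i b i ^+ 2; set S := \sum_i a i * b i.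
have lagrange : \sum_i \sum_j (a i * b j - a j * b i) ^+ 2 = 2 * (A * B - S ^+ 2).
  have -> : \sum_i \sum_j (a i * b j - a j * b i) ^+ 2 =
      \sum_i \sum_j (a i ^+ 2 * b j ^+ 2) + \sum_i \sum_j (b i ^+ 2 * a j ^+ 2)
      - 2 * \sum_i \sum_j (a i * b i) * (a j * b j).
    rewrite mulr_sumr -big_split -sumrB /=; apply: eq_bigr => i _.
    rewrite mulr_sumr -big_split -sumrB /=; apply: eq_bigr => j _; ring.
  under eq_bigr do rewrite -mulr_sumr.
  under [X in _ + X - _]eq_bigr do rewrite -mulr_sumr.
  under [X in _ - 2 * X]eq_bigr do rewrite -mulr_sumr.
  by rewrite -!mulr_suml -/A -/B -/S; ring.
suff : 0 <= 2 * (A * B - S ^+ 2) by lra.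
by rewrite -lagrange; do 2!(apply: sumr_ge0 => ? _); exact: sqr_ge0.
Qed.

Lemma minkowski a b :
  Num.sqrt (\sum_i (a i + b i) ^+ 2) <=
  Num.sqrt (\sum_i a i ^+ 2) + Num.sqrt (\sum_i b i ^+ 2).
Proof.
set A := \sum_i a i ^+ 2; set B := \sum_i b i ^+ 2.
have A0 : 0 <= A by apply: sumr_ge0 => i _; exact: sqr_ge0.
have B0 : 0 <= B by apply: sumr_ge0 => i _; exact: sqr_ge0.
rewrite -[leRHS]ger0_norm ?addr_ge0 ?sqrtr_ge0 // -sqrtr_sqr ler_sqrt ?sqr_ge0 //.
have -> : \sum_i (a i + b i) ^+ 2 = A + B + 2 * \sum_i a i * b i.
  rewrite /A /B mulr_sumr -!big_split /=; apply: eq_bigr => i _; ring.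
have -> : (Num.sqrt A + Num.sqrt B) ^+ 2 = A + B + 2 * Num.sqrt (A * B).
  by rewrite sqrrD !sqr_sqrtr // sqrtrM // -mulr_natl; ring.
suff : \sum_i a i * b i <= Num.sqrt (A * B) by lra.
rewrite (le_trans (ler_norm _)) // -sqrtr_sqr ler_sqrt ?mulr_ge0 //.
exact: cauchy_schwarz.
Qed.

End EuclideanSums.

Section GridDistance.
Variables (R : realType) (d Delta : nat).
Implicit Types (x y w : point d Delta) (C : {set point d Delta}).

Lemma dist_ge0 x y : 0 <= dist R x y.
Proof. exact: sqrtr_ge0. Qed.

Lemma distC x y : dist R x y = dist R y x.
Proof. by congr Num.sqrt; apply: eq_bigr => i _; rewrite -sqrrN opprB. Qed.

Lemma dist_triangle x y w : dist R x y <= dist R x w + dist R w y.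
Proof.
rewrite /dist (eq_bigr (fun i => ((Defs.coord R x i - Defs.coord R w i) +
  (Defs.coord R w i - Defs.coord R y i)) ^+ 2)) ?minkowski // => i _.
by rewrite addrA subrK.
Qed.

Lemma mincost_ge0 (z : R) y C : 0 <= mincost z y C.
Proof.
rewrite /mincost; case: pickP => // c0 _.
by apply: le_bigmin => *; exact: powR_ge0.
Qed.

Lemma Cost_ge0 (z : R) (X : {set point d Delta}) C : 0 <= Cost z X C.
Proof. by apply: sumr_ge0 => y _; exact: mincost_ge0. Qed.

Lemma powR_le_mincost (z rho : R) y C :
  0 <= z -> 0 <= rho -> C != set0 ->
  (forall c, c \in C -> rho <= dist R y c) -> powR rho z <= mincost z y C.
Proof.
move=> z0 rho0 /set0Pn[c0 c0C] far.
have le_pow c : c \in C -> powR rho z <= powR (dist R y c) z.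
  by move=> cC; apply: ge0_ler_powR; rewrite ?nnegrE ?dist_ge0 ?far.
rewrite /mincost; case: pickP => [c1 c1C | /(_ c0)]; last by rewrite c0C.
exact: le_bigmin (le_pow _ c1C) le_pow.
Qed.

Lemma powR_quarter_le_mincostD (z r : R) x y qy (S Q : {set point d Delta}) :
  0 <= z -> 0 <= r -> S != set0 -> qy \in Q ->
  (forall s, s \in S -> r <= dist R x s) ->
  (forall q, q \in Q -> dist R y qy <= dist R y q) ->
  dist R x qy <= r / 2 ->
  powR (r / 4) z <= mincost z y S + mincost z y Q.
Proof.
move=> z0 r0 S0 qyQ farS closest near_qy.
have [far_qy | near_y] := lerP (r / 4) (dist R y qy).
  have := mincost_ge0 z y S; suff : powR (r / 4) z <= mincost z y Q by lra.
  apply: powR_le_mincost; rewrite ?divr_ge0 //; first by apply/set0Pn; exists qy.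
  by move=> q qQ; rewrite (le_trans far_qy) ?closest.
have := mincost_ge0 z y Q; suff : powR (r / 4) z <= mincost z y S by lra.
apply: powR_le_mincost; rewrite ?divr_ge0 // => s sS.
have := farS s sS; have := dist_triangle x s qy; have := dist_triangle qy s y.
by rewrite (distC qy y); lra.
Qed.

End GridDistance.

Lemma card_mulr_le_sum (R : realDomainType) (I : finType) (A B : {set I})
    (f : I -> R) (m : R) :
  A \subset B -> (forall i, i \in B -> 0 <= f i) ->
  (forall i, i \in A -> m <= f i) -> #|A|%:R * m <= \sum_(i in B) f i.
Proof.
move=> /subsetP AB f0 fA; rewrite mulr_natl -sumr_const.
rewrite [leRHS](bigID (mem A)) /= -[leLHS]addr0; apply: lerD.
  have -> : \sum_(i in B | i \in A) f i = \sum_(i in A) f i.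
    by apply: eq_bigl => i; rewrite andb_idl // => /AB.
  exact: ler_sum.
by apply: sumr_ge0 => i /andP[iB _]; exact: f0.
Qed.

Theorem lemma3p8 (R : realType) (z alpha beta : R) :
  1 <= z -> 1 <= alpha -> 1 <= beta ->
  exists gamma : R, 1 <= gamma /\
  forall (d Delta k : nat) (X : {set point d Delta}) (x p : point d Delta)
         (Q S : {set point d Delta}) (Psi : R)
         (sigma : point d Delta -> point d Delta),
    x \in X -> p \in X ->
    let r := dist R x p in
    (* Q: alpha-approximation among sets with at most k centers containing p *)
    feasible_p k X p Q ->
    (forall C, feasible_p k X p C -> Cost z X Q <= alpha * Cost z X C) ->
    (* Psi: beta-approximation of Cost(X,Q) *)
    Cost z X Q / beta <= Psi -> Psi <= beta * Cost z X Q ->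
    (* S: optimal among such sets with no center in the open ball B_r(x) *)
    feasible_p k X p S -> (forall s, s \in S -> r <= dist R x s) ->
    (forall C, feasible_p k X p C -> (forall c, c \in C -> r <= dist R x c) ->
       Cost z X S <= Cost z X C) ->
    (* sigma: assignment of each point to a closest center of Q *)
    (forall y, y \in X -> sigma y \in Q /\
       (forall q, q \in Q -> dist R y (sigma y) <= dist R y q)) ->
    let n_b := #|[set y in X | dist R x (sigma y) <= r / 2]| in
    Psi + n_b%:R * powR r z <= gamma * Cost z X S.
Proof.
move=> z1 a1 b1; have P0 : 0 <= powR 4 z := powR_ge0 _ _.
exists (beta * alpha + powR 4 z * (1 + alpha)); split.
  have : 0 <= powR 4 z * (1 + alpha) by rewrite mulr_ge0 //; lra.
  nra.
move=> d Delta k X x p Q S Psi sigma _ _ r _ Q_approx _ Psi_le FS farS _ sigma_closest.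
cbv zeta; set n_b := #|_|.
have z0 : 0 <= z by lra.
have r0 : 0 <= r by exact: dist_ge0.
have S0 : S != set0 by apply/set0Pn; exists p; case: FS => _ [].
have CQ_le := Q_approx S FS; have CS0 : 0 <= Cost z X S by exact: Cost_ge0.
have pow_r : powR r z = powR 4 z * powR (r / 4) z.
  by rewrite -powRM ?divr_ge0 // mulrC divfK ?pnatr_eq0.
have ball_costs : n_b%:R * powR (r / 4) z <= Cost z X S + Cost z X Q.
  rewrite /Cost -big_split; apply: card_mulr_le_sum => [|y _|y].
  - by apply/subsetP => y; rewrite inE => /andP[].
  - by rewrite addr_ge0 ?mincost_ge0.
  rewrite inE => /andP[/sigma_closest[sQ closest] near].
  exact: powR_quarter_le_mincostD z0 r0 S0 sQ farS closest near.
by have := ler_wpM2l P0 ball_costs; rewrite pow_r; nra.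
Qed.
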